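(* Let $Q^\dagger$ be any linear combination of products of the form $\prod_{j\in Y}s_j^\dagger$ (over arbitrary vertex subsets $Y$). For every $k$-local operator $O$, the $(2k+1)$-fold iterated commutator $[\cdots[[O,Q^\dagger],Q^\dagger],\dots,Q^\dagger]$ vanishes. Consequently, if $H$ is a $k$-local operator with $H(Q^\dagger)^q|\overline 0\rangle=0$ for all $q\in\{0,1,\dots,2k\}$, then $H(Q^\dagger)^p|\overline 0\rangle=0$ for all integers $p\ge0$.
   Context: System of $N$ qubits with local basis $|0\rangle,|1\rangle$; $s_i^\dagger$ acts on site $i$ as $s^\dagger|0\rangle=|1\rangle$, $s^\dagger|1\rangle=0$, $s_i=(s_i^\dagger)^\dagger$; $|\overline 0\rangle=|0\rangle^{\otimes N}$. Every operator has a unique expansion in normal-ordered strings $s^\dagger_{j_1}\cdots s^\dagger_{j_n}s_{k_1}\cdots s_{k_m}$ (the $j$'s pairwise distinct, the $k$'s pairwise distinct); an operator is $k$-local if every string with nonzero coefficient in its expansion involves at most $k$ distinct sites. *)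

From HB Require Import structures.
From mathcomp Require Import all_boot all_order all_algebra.
Set Implicit Arguments. Unset Strict Implicit. Unset Printing Implicit Defensive.
Import GRing.Theory.
Local Open Scope ring_scope.

(* N qubits; computational basis state x (0 <= x < 2^N) has site i in state
   |1> iff bit i of x is set. Operators are 2^N x 2^N matrices over a
   commutative ring R (the paper: complex numbers). *)

Definition bit (x i : nat) : bool := odd (x %/ 2 ^ i).

Section Qubits.
Variables (R : comNzRingType) (N : nat).

Definition Op := 'M[R]_(2 ^ N).

(* s_i^dagger : |..0_i..> -> |..1_i..>, |..1_i..> -> 0 *)
Definition sdag (i : 'I_N) : Op :=
  \matrix_(x, y) ((~~ bit y i) && ((x : nat) == y + 2 ^ i)%N)%:R.

(* s_i = (s_i^dagger)^dagger (entries are real, so adjoint = transpose) *)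
Definition sann (i : 'I_N) : Op := (sdag i)^T.

Definition vac : 'cV[R]_(2 ^ N) := \col_x ((x : nat) == 0%N)%:R.

(* normal-ordered string  prod_{j in J} s_j^dagger  prod_{k in K} s_k
   (creation operators on distinct sites commute, likewise annihilations) *)
Definition nstring (J K : {set 'I_N}) : Op :=
  (\prod_(j in J) sdag j) * (\prod_(k in K) sann k).

Definition klocal (k : nat) (O : Op) : Prop :=
  exists c : {set 'I_N} -> {set 'I_N} -> R,
    O = \sum_(J : {set 'I_N}) \sum_(K : {set 'I_N}) c J K *: nstring J K
    /\ forall J K, c J K != 0 -> (#|J :|: K| <= k)%N.

Definition Qdag (a : {set 'I_N} -> R) : Op :=
  \sum_(Y : {set 'I_N}) a Y *: \prod_(j in Y) sdag j.

Definition comm (A B : Op) : Op := A * B - B * A.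

Definition itcomm (n : nat) (O Q : Op) : Op := iter n (fun X => comm X Q) O.

End Qubits.

From mathcomp Require Import all_boot all_order all_algebra zify.
Set Implicit Arguments. Unset Strict Implicit. Unset Printing Implicit Defensive.
Import GRing.Theory.
Local Open Scope ring_scope.

(* Write ad(X) = X Q - Q X, so that ad^n(O) is a signed sum of terms
   Q^i O Q^m with i + m = n.  For a normal-ordered string O supported on S,
   |S| <= k, split Q = Q_S + Q' where Q_S collects the monomials meeting S.
   Q' commutes with O and with Q_S, so ad^n_Q(O) = ad^n_{Q_S}(O); and since
   the s_j^dagger commute and square to zero, Q_S^(|S|+1) = 0.  Every term of
   ad^(2k+1)(O) has i > k or m > k, hence vanishes.  For the second claim,
   ad^d(H) = 0 with d = 2k+1 rewrites H Q^d as a combination of Q^i H Q^m with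
   m < d, and H Q^p |0> = 0 follows by strong induction on p. *)

Section Bits.
Local Open Scope nat_scope.

Lemma bit_add_expn_id x i : bit (x + 2 ^ i) i = ~~ bit x i.
Proof. by rewrite /bit addnC -{1}(mul1n (2 ^ i)) divnMDl ?expn_gt0. Qed.

Lemma bit_decomp x j : ~~ bit x j ->
  exists h r, x = h * 2 ^ j.+1 + r /\ r < 2 ^ j.
Proof.
rewrite /bit => /negbTE odd_q.
exists (x %/ 2 ^ j)./2, (x %% 2 ^ j); split; last by rewrite ltn_pmod ?expn_gt0.
have := odd_double_half (x %/ 2 ^ j); rewrite odd_q add0n => q_eq.
by rewrite {1}(divn_eq x (2 ^ j)) expnS mulnA muln2 q_eq.
Qed.

Lemma bit_add_expn x i j : i != j -> ~~ bit x j -> bit (x + 2 ^ j) i = bit x i.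
Proof.
move=> neq_ij x_j; case: (ltngtP i j) => [lt_ij|lt_ji|eq_ij].
- rewrite /bit -(subnK (ltnW lt_ij)) expnD addnC divnMDl ?expn_gt0 //.
  by rewrite oddD oddX subn_eq0 leqNgt lt_ij.
- have [h [r [-> lt_r]]] := bit_decomp x_j.
  rewrite -addnA /bit -(subnK lt_ji) expnD [2 ^ (i - _) * _]mulnC !divnMA.
  have lt_r1 : r < 2 ^ j.+1 by rewrite (ltn_trans lt_r) // ltn_exp2l.
  have lt_r2 : r + 2 ^ j < 2 ^ j.+1 by rewrite expnS mul2n -addnn ltn_add2r.
  by rewrite !divnMDl ?expn_gt0 // (divn_small lt_r1) (divn_small lt_r2).
- by rewrite eq_ij eqxx in neq_ij.
Qed.

Lemma expn_le_bit y i : bit y i -> 2 ^ i <= y.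
Proof.
by rewrite /bit -divn_gt0 ?expn_gt0 //; case: (y %/ 2 ^ i).
Qed.

Lemma add_expn_ltn z i n : z < 2 ^ n -> i < n -> ~~ bit z i -> z + 2 ^ i < 2 ^ n.
Proof.
move=> lt_z lt_i /bit_decomp [h [r [z_eq lt_r]]].
have expn_n : 2 ^ n = 2 ^ (n - i.+1) * 2 ^ i.+1 by rewrite -expnD subnK.
move: lt_z; rewrite expn_n z_eq expnS => lt_z.
have lt_h : h < 2 ^ (n - i.+1).
  by rewrite -(ltn_pmul2r (expn_gt0 2 i.+1)) expnS (leq_ltn_trans (leq_addr r _)).
have : h.+1 * (2 * 2 ^ i) <= 2 ^ (n - i.+1) * (2 * 2 ^ i) by rewrite leq_mul2r lt_h orbT.
lia.
Qed.

End Bits.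

Section BasisMaps.
Variables (R : comNzRingType) (N : nat).
Local Notation Op := (Op R N).

Definition pmx (f : nat -> option nat) : Op :=
  \matrix_(x, y) (f (y : nat) == Some (x : nat))%:R.

Lemma pmx_mul f g :
    (forall (y : 'I_(2 ^ N)) z, g (y : nat) = Some z -> (z < 2 ^ N)%N) ->
  pmx f * pmx g = pmx (fun y => obind f (g y)).
Proof.
move=> g_bound; apply/matrixP => x y; rewrite -mulmxE !mxE.
case gy: (g y) => [z|] /=; last by rewrite big1 // => u _; rewrite !mxE gy mulr0.
rewrite (bigD1 (Ordinal (g_bound y z gy))) //= !mxE gy eqxx mulr1.
rewrite big1 ?addr0 // => u neq_u; rewrite !mxE gy.
suff /negbTE-> : Some z != Some (u : nat) by rewrite mulr0.
by apply: contra neq_u => /eqP[z_eq]; apply/eqP/val_inj; rewrite /= z_eq.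
Qed.

Lemma pmx_none : pmx (fun _ => None) = 0.
Proof. by apply/matrixP => x y; rewrite !mxE. Qed.

Lemma eq_pmx f g : (forall y, (y < 2 ^ N)%N -> f y = g y) -> pmx f = pmx g.
Proof. by move=> fg; apply/matrixP => x y; rewrite !mxE fg. Qed.

Definition raise (i y : nat) := if bit y i then None else Some (y + 2 ^ i)%N.
Definition lower (i y : nat) := if bit y i then Some (y - 2 ^ i)%N else None.

Lemma sdagE i : sdag R i = pmx (raise i).
Proof.
by apply/matrixP => x y; rewrite !mxE /raise; case: (bit y i); rewrite //= eq_sym.
Qed.

Lemma sannE i : sann R i = pmx (lower i).
Proof.
apply/matrixP => x y; rewrite /sann !mxE /lower; congr (nat_of_bool _)%:R.
apply/idP/idP => [/andP[x_i /eqP->]|].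
  by rewrite bit_add_expn_id x_i addnK.
case y_i: (bit y i) => //= /eqP[x_eq].
have y_eq : (y : nat) = (x + 2 ^ i)%N by rewrite -x_eq subnK ?expn_le_bit.
by move: y_i; rewrite y_eq bit_add_expn_id => ->; rewrite eqxx.
Qed.

Lemma raise_bound (i : 'I_N) (y : 'I_(2 ^ N)) z : raise i y = Some z -> (z < 2 ^ N)%N.
Proof.
by rewrite /raise; case y_i: (bit y i) => //= -[<-]; rewrite add_expn_ltn ?y_i.
Qed.

Lemma lower_bound (i : 'I_N) (y : 'I_(2 ^ N)) z : lower i y = Some z -> (z < 2 ^ N)%N.
Proof.
by rewrite /lower; case: (bit y i) => //= -[<-]; rewrite (leq_ltn_trans (leq_subr _ _)).
Qed.

Lemma sdagC (i j : 'I_N) : GRing.comm (sdag R i) (sdag R j).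
Proof.
rewrite /GRing.comm !sdagE !pmx_mul; try exact: raise_bound.
apply: eq_pmx => y _; have [-> //|neq_ij] := eqVneq (i : nat) j.
have neq_ji : (j : nat) != i by rewrite eq_sym.
rewrite /raise; case y_j: (bit y j); case y_i: (bit y i) => //=.
- by rewrite bit_add_expn ?y_i ?y_j.
- by rewrite bit_add_expn ?y_i ?y_j.
- by rewrite !bit_add_expn ?y_i ?y_j //= addnAC.
Qed.

Lemma sdag_sqr (i : 'I_N) : sdag R i * sdag R i = 0.
Proof.
rewrite sdagE pmx_mul -?pmx_none; last exact: raise_bound.
by apply: eq_pmx => y _; rewrite /raise; case y_i: (bit y i); rewrite //= bit_add_expn_id y_i.
Qed.

Lemma sdag_sannC (i j : 'I_N) : i != j -> GRing.comm (sdag R i) (sann R j).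
Proof.
move=> neq_ij; rewrite /GRing.comm sdagE sannE !pmx_mul; try exact: raise_bound;
  try exact: lower_bound.
have neq_ji : (j : nat) != i by rewrite eq_sym.
apply: eq_pmx => y _; rewrite /raise /lower.
case y_j: (bit y j) => /=; last first.
  by case y_i: (bit y i) => //=; rewrite bit_add_expn ?y_i ?y_j.
have [x -> x_j] : exists2 x, y = (x + 2 ^ j)%N & ~~ bit x j.
  exists (y - 2 ^ j)%N; first by rewrite subnK ?expn_le_bit.
  by move: (y_j); rewrite -{1}(subnK (expn_le_bit y_j)) bit_add_expn_id => ->.
rewrite addnK bit_add_expn //; case x_i: (bit x i) => //=.
by rewrite addnAC bit_add_expn_id bit_add_expn ?x_i //= x_j addnK.
Qed.

End BasisMaps.

Section IteratedCommutator.
Variable T : pzRingType.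

Definition iter_adr n (O A : T) := iter n (fun X => X * A - A * X) O.

Lemma iter_adrD n (O O' A : T) :
  iter_adr n (O + O') A = iter_adr n O A + iter_adr n O' A.
Proof.
by elim: n => //= n ->; rewrite mulrDl mulrDr opprD addrACA.
Qed.

Lemma iter_adr0 n (A : T) : iter_adr n 0 A = 0.
Proof. by elim: n => //= n ->; rewrite mul0r mulr0 subr0. Qed.

Lemma iter_adr_sum n (I : Type) (r : seq I) (P : pred I) (F : I -> T) A :
  iter_adr n (\sum_(i <- r | P i) F i) A = \sum_(i <- r | P i) iter_adr n (F i) A.
Proof. exact: (big_morph _ (fun O O' => iter_adrD n O O' A) (iter_adr0 n A)). Qed.

Lemma iter_adr_mull n (C O A : T) : GRing.comm C A ->
  iter_adr n (C * O) A = C * iter_adr n O A.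
Proof. by move=> CA; elim: n => //= n ->; rewrite mulrBr !mulrA CA. Qed.

Lemma iter_adr_addr_comm n (O A B : T) : GRing.comm B O -> GRing.comm B A ->
  iter_adr n O (A + B) = iter_adr n O A.
Proof.
move=> BO BA; have B_iter m : GRing.comm B (iter_adr m O A).
  by elim: m => //= m IHm; apply: commrB; apply: commrM.
elim: n => //= n IHn; rewrite IHn mulrDr mulrDl (B_iter n).
by rewrite opprD addrACA subrr addr0.
Qed.

Inductive sandwich_comb (O A : T) (P : nat -> nat -> Prop) : T -> Prop :=
| SandwichComb0 : sandwich_comb O A P 0
| SandwichCombT i m : P i m -> sandwich_comb O A P (A ^+ i * O * A ^+ m)
| SandwichCombN X : sandwich_comb O A P X -> sandwich_comb O A P (- X)
| SandwichCombD X Y :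
    sandwich_comb O A P X -> sandwich_comb O A P Y -> sandwich_comb O A P (X + Y).

Lemma sandwich_comb_adr (O A : T) (P P' : nat -> nat -> Prop) X :
    (forall i m, P i m -> P' i m.+1 /\ P' i.+1 m) ->
  sandwich_comb O A P X -> sandwich_comb O A P' (X * A - A * X).
Proof.
move=> PP'; elim=> [|i m /PP'[P'r P'l]|Y _ IHY|Y Z _ IHY _ IHZ].
- by rewrite mul0r mulr0 subr0; apply: SandwichComb0.
- rewrite -mulrA -exprSr !mulrA -exprS.
  by apply: SandwichCombD; [exact: SandwichCombT|apply/SandwichCombN/SandwichCombT].
- by rewrite mulNr mulrN -opprD; apply: SandwichCombN.
- by rewrite mulrDl mulrDr opprD addrACA; apply: SandwichCombD.
Qed.

Lemma iter_adr_sandwich n (O A : T) :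
  sandwich_comb O A (fun i m => (i + m = n)%N) (iter_adr n O A).
Proof.
elim: n => [|n IHn] /=.
  have O_term := @SandwichCombT O A (fun i m => (i + m = 0)%N) 0 0 erefl.
  by rewrite expr0 mul1r mulr1 in O_term.
by apply: sandwich_comb_adr IHn => i m <-; rewrite addnS addSn.
Qed.

Lemma iter_adr_nilpotent k n (O A : T) : A ^+ k.+1 = 0 -> (2 * k < n)%N ->
  iter_adr n O A = 0.
Proof.
move=> A_nil lt_n.
elim: (iter_adr_sandwich n O A) => [//|i m im_eq|X _ ->|X Y _ -> _ ->].
- have [le_i|lt_i] := leqP k.+1 i.
    by rewrite -(subnK le_i) exprD A_nil mulr0 !mul0r.
  have le_m : (k.+1 <= m)%N by lia.
  by rewrite -(subnK le_m) exprD A_nil !mulr0.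
- exact: oppr0.
- exact: addr0.
Qed.

Lemma iter_adr_sub_mulr n (O A : T) :
  sandwich_comb O A (fun _ m => (m < n)%N) (iter_adr n O A - O * A ^+ n).
Proof.
elim: n => [|n IHn] /=; first by rewrite expr0 mulr1 subrr; apply: SandwichComb0.
set X := iter_adr n O A.
have -> : X * A - A * X - O * A ^+ n.+1 =
    ((X - O * A ^+ n) * A - A * (X - O * A ^+ n)) - A ^+ 1 * O * A ^+ n.
  rewrite expr1 exprSr mulrBl mulrBr !mulrA opprB addrA.
  by rewrite [X in _ = X - _]addrAC addrK [LHS]addrAC.
apply: SandwichCombD; last by apply/SandwichCombN/SandwichCombT.
by apply: sandwich_comb_adr IHn => i m lt_m; split; last exact: ltnW.
Qed.

End IteratedCommutator.

Section Annihilation.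
Variables (R : pzRingType) (n : nat).

Lemma sandwich_comb_mulmx_eq0 (H Q : 'M[R]_n) (v : 'cV_n) d j Z :
    (forall p, (p < d + j)%N -> H *m Q ^+ p *m v = 0) ->
  sandwich_comb H Q (fun _ m => (m < d)%N) Z -> Z *m Q ^+ j *m v = 0.
Proof.
move=> H_eq0; elim=> [|i m lt_m|X _ IHX|X Y _ IHX _ IHY].
- by rewrite !mul0mx.
- have -> : Q ^+ i * H * Q ^+ m *m Q ^+ j = Q ^+ i *m (H *m Q ^+ (m + j)).
    by rewrite exprD !mulmxE !mulrA.
  by rewrite -mulmxA H_eq0 ?mulmx0 // ltn_add2r.
- by rewrite !mulNmx IHX oppr0.
- by rewrite !mulmxDl IHX IHY addr0.
Qed.

Lemma mulmx_expr_eq0 (H Q : 'M[R]_n) (v : 'cV_n) d : iter_adr d H Q = 0 ->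
    (forall q, (q < d)%N -> H *m Q ^+ q *m v = 0) ->
  forall p, H *m Q ^+ p *m v = 0.
Proof.
move=> ad_eq0 H_eq0 p; elim/ltn_ind: p => p IHp.
have [lt_p|le_p] := ltnP p d; first exact: H_eq0.
have [E E_comb HQd] : exists2 E, sandwich_comb H Q (fun _ m => (m < d)%N) E
    & H * Q ^+ d = - E.
  exists (iter_adr d H Q - H * Q ^+ d); first exact: iter_adr_sub_mulr.
  by rewrite ad_eq0 sub0r opprK.
rewrite -(subnKC le_p) exprD mulmxE mulrA HQd -mulmxE !mulNmx.
rewrite (sandwich_comb_mulmx_eq0 _ E_comb) ?oppr0 // => q lt_q.
by apply: IHp; rewrite subnKC in lt_q.
Qed.

End Annihilation.

Section CommutingSquareZero.
Variables (T : pzRingType) (I : finType) (x : I -> T) (c : {set I} -> T).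
Hypotheses (xC : forall i j, GRing.comm (x i) (x j)) (x_sqr : forall i, x i * x i = 0).
Hypotheses (cxC : forall Y i, GRing.comm (c Y) (x i)) (cC : forall Y Z, GRing.comm (c Y) (c Z)).

Definition monsum (P : pred {set I}) : T := \sum_(Y | P Y) c Y * \prod_(j in Y) x j.

Lemma prodr_rem_comm (r : seq I) (P : pred I) s : uniq r -> s \in r -> P s ->
  \prod_(j <- r | P j) x j = x s * \prod_(j <- r | P j && (j != s)) x j.
Proof.
elim: r => [|i r IHr] //= /andP[i_r uniq_r]; rewrite inE => s_ir Ps; rewrite !big_cons.
have [eq_is|neq_is] := eqVneq i s.
  subst i; rewrite Ps andbF; congr (_ * _).
  rewrite big_seq_cond [RHS]big_seq_cond; apply: eq_bigl => j.
  case: (boolP (j \in r)) => //= j_r.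
  by rewrite (_ : j != s) ?andbT //; apply: contraNneq i_r => <-.
have s_r : s \in r by case/orP: s_ir => // /eqP s_eq; rewrite s_eq eqxx in neq_is.
rewrite IHr // andbT; case: (P i) => //.
by rewrite !mulrA xC.
Qed.

Lemma prodr_setD1_comm (Y : {set I}) s : s \in Y ->
  \prod_(j in Y) x j = x s * \prod_(j in Y :\ s) x j.
Proof.
move=> s_Y; rewrite (@prodr_rem_comm _ (mem Y) s) ?index_enum_uniq ?mem_index_enum //.
by congr (_ * _); apply: eq_bigl => j; rewrite in_setD1 andbC.
Qed.

Lemma monomialC Y Z : GRing.comm (c Y * \prod_(j in Y) x j) (c Z * \prod_(j in Z) x j).
Proof.
have c_prod W V : GRing.comm (c W) (\prod_(j in V) x j).
  by apply: commr_prod => i _; apply: cxC.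
have prodC W V : GRing.comm (\prod_(j in W) x j) (\prod_(j in V) x j).
  by apply: commr_prod => i _; apply/commr_sym/commr_prod => j _; apply: xC.
apply: commrM; apply: commr_sym; apply: commrM; rewrite ?cC ?c_prod //.
exact/commr_sym/c_prod.
Qed.

Lemma monsumC P P' : GRing.comm (monsum P) (monsum P').
Proof.
by apply: commr_sum => Y _; apply/commr_sym/commr_sum => Z _; apply: monomialC.
Qed.

Lemma exprD_sqr0 (a b : T) j : GRing.comm a b -> b * b = 0 -> a ^+ j = 0 ->
  (a + b) ^+ j.+1 = 0.
Proof.
move=> ab b_sqr a_nil; rewrite exprDn_comm //; apply: big1 => -[i lt_i] _ /=.
have [le2i|lti2] := leqP 2 i.
  by rewrite -(subnK le2i) exprD expr2 b_sqr mulr0 mulr0 mul0rn.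
by rewrite (_ : j.+1 - i = j + (1 - i))%N ?exprD ?a_nil ?mul0r ?mul0rn //; lia.
Qed.

(* Split off the monomials containing [x s]: they square to zero, the rest
   only involve [S :\ s]. *)
Lemma monsum_nilpotent (S : {set I}) (P : pred {set I}) :
  (forall Y, P Y -> Y :&: S != set0) -> monsum P ^+ #|S|.+1 = 0.
Proof.
elim: {S}#|S| {-2}S (erefl #|S|) P => [|m IHm] S S_card P meet_S.
  move/eqP: S_card; rewrite cards_eq0 => /eqP S0.
  rewrite /monsum big_pred0 ?exprS ?mul0r // => Y.
  by apply/negP => /meet_S; rewrite S0 setI0 eqxx.
have [s s_S] : {s | s \in S} by apply/sigW/set0Pn; rewrite -card_gt0 S_card.
rewrite S_card /monsum (bigID (fun Y : {set I} => s \notin Y)) /=.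
apply: exprD_sqr0.
- exact: (monsumC (fun Y => P Y && (s \notin Y)) (fun Y => P Y && ~~ (s \notin Y))).
- set B := \sum_(Y | P Y && (s \in Y)) c Y * \prod_(j in Y :\ s) x j.
  have -> : \sum_(Y | P Y && ~~ (s \notin Y)) c Y * \prod_(j in Y) x j = x s * B.
    rewrite mulr_sumr; apply: eq_big => Y; rewrite ?negbK // => /andP[_ s_Y].
    by rewrite (prodr_setD1_comm s_Y) !mulrA cxC.
  have xB : GRing.comm (x s) B.
    by apply: commr_sum => Y _; apply/commrM/commr_prod => //; apply/commr_sym.
  by rewrite mulrA -(mulrA _ B) -xB mulrA x_sqr !mul0r.
- have S'_card : #|S :\ s| = m by rewrite (cardsD1 s S) s_S in S_card; case: S_card.
  rewrite -S'_card; apply: (IHm _ S'_card (fun Y => P Y && (s \notin Y))).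
  move=> Y /andP[/meet_S /set0Pn[y]]; rewrite inE => /andP[y_Y y_S] s_Y.
  by apply/set0Pn; exists y; rewrite !inE y_Y y_S andbT; apply: contraNneq s_Y => <-.
Qed.

End CommutingSquareZero.

Section Proposition.
Variables (R : comNzRingType) (N : nat).
Local Notation Op := (Op R N).

Lemma itcommE n (O Q : Op) : itcomm n O Q = iter_adr n O Q.
Proof. by []. Qed.

Lemma comm_scalar_mx (r : R) (A : Op) : GRing.comm r%:M A.
Proof. by rewrite /GRing.comm -!mulmxE scalar_mxC. Qed.

Lemma QdagE (a : {set 'I_N} -> R) :
  Qdag a = monsum (@sdag R N) (fun Y => (a Y)%:M : Op) predT.
Proof. by apply: eq_bigr => Y _; rewrite -mul_scalar_mx mulmxE. Qed.

Lemma nstring_prod_sdagC J K (Y : {set 'I_N}) : Y :&: K = set0 ->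
  GRing.comm (nstring R J K) (\prod_(i in Y) sdag R i).
Proof.
move=> YK0; apply: commr_sym; apply: commrM.
  by apply: commr_prod => j _; apply/commr_sym/commr_prod => i _; apply: sdagC.
apply: commr_prod => j j_K; apply/commr_sym/commr_prod => i i_Y.
apply/commr_sym/sdag_sannC; apply: contraTneq j_K => <-.
by apply/negP => i_K; move/setP/(_ i): YK0; rewrite !inE i_Y i_K.
Qed.

Lemma itcomm_nstring k J K (a : {set 'I_N} -> R) : (#|J :|: K| <= k)%N ->
  itcomm (2 * k + 1) (nstring R J K) (Qdag a) = 0.
Proof.
set S := J :|: K => le_S; set c := fun Y => (a Y)%:M : Op.
have cxC Y i : GRing.comm (c Y) (sdag R i) by apply: comm_scalar_mx.
have cC Y Z : GRing.comm (c Y) (c Z) by apply: comm_scalar_mx.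
pose meets Y := Y :&: S != set0.
have -> : Qdag a = monsum (@sdag R N) c meets + monsum (@sdag R N) c (predC meets).
  by rewrite QdagE /monsum (bigID meets).
rewrite itcommE iter_adr_addr_comm.
- apply: (@iter_adr_nilpotent _ k); last by rewrite addn1.
  have meets_nil :=
    monsum_nilpotent (@sdagC R N) (@sdag_sqr R N) cxC cC (S := S) (P := meets).
  by rewrite -(subnK le_S) -addnS exprD meets_nil ?mulr0.
- apply/commr_sym/commr_sum => Y /negbNE/eqP YS0.
  apply: commrM; first exact/commr_sym/comm_scalar_mx.
  by apply: nstring_prod_sdagC; apply/eqP; rewrite -subset0 -YS0 setIS ?subsetUr.
- exact: monsumC (@sdagC R N) cxC cC _ _.
Qed.

Lemma itcomm_klocal k (a : {set 'I_N} -> R) (O : Op) :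
  klocal k O -> itcomm (2 * k + 1) O (Qdag a) = 0.
Proof.
case=> c [-> c_loc]; rewrite itcommE iter_adr_sum; apply: big1 => J _.
rewrite iter_adr_sum; apply: big1 => K _.
have [->|/c_loc le_JK] := eqVneq (c J K) 0; first by rewrite scale0r iter_adr0.
have := itcomm_nstring a le_JK; rewrite itcommE => nstring_eq0.
rewrite -mul_scalar_mx mulmxE iter_adr_mull; last exact: comm_scalar_mx.
by rewrite nstring_eq0 mulr0.
Qed.

End Proposition.

Theorem proposition9 (R : comNzRingType) (N k : nat) (a : {set 'I_N} -> R) :
  (forall O : Op R N, klocal k O -> itcomm (2 * k + 1) O (Qdag a) = 0)
  /\
  (forall H : Op R N, klocal k H ->
     (forall q : nat, (q <= 2 * k)%N -> H *m (Qdag a ^+ q) *m vac R N = 0) ->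
     forall p : nat, H *m (Qdag a ^+ p) *m vac R N = 0).
Proof.
split=> [O|H H_loc H_eq0]; first exact: itcomm_klocal.
apply: (mulmx_expr_eq0 (d := 2 * k + 1)) => [|q]; first exact: itcomm_klocal H_loc.
by rewrite addn1 ltnS; apply: H_eq0.
Qed.
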